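(* Let $V\subseteq\mathbb{Z}^2$ be infinite and connected (in the nearest-neighbour lattice $(\mathbb{Z}^2,\mathcal{E}^2)$) with $\mathbb{Z}^2\setminus V$ also infinite and connected, let $E$ be the set of nearest-neighbour edges with both endpoints in $V$, and let $(v_i)_{i\in\mathbb{Z}}$ be the boundary vertex sequence of $V$ described in the context. Then for every $\omega\in[0,\infty)^E$ and every $x,y\in V$, the limit \[ B(x,y):=\lim_{n\to\infty} B_n(x,y),\qquad B_n(x,y)=\tau(x,v_n)-\tau(y,v_n),\] exists (as a real number).
   Context: The dual lattice has vertex set $\mathbb{Z}^2+(1/2,1/2)$ and edge set $\mathcal{E}^2+(1/2,1/2)$; the dual edge $e^*$ is the one bisecting $e\in\mathcal{E}^2$. For $V$ as in the claim there is a doubly infinite dual path $\Gamma=(e_i^* )_{i\in\mathbb{Z}}$ with no vertex self-intersections such that $(V,E)$ is one of the two components of the graph obtained from $(\mathbb{Z}^2,\mathcal{E}^2)$ by deleting the edges $e_i$ dual to the $e_i^*$; fix such a $\Gamma$ and its indexing, and let $v_i$ be the endpoint of $e_i$ lying in $V$ (a vertex may appear as $v_i$ for several $i$). For $\omega=(\omega_e)_{e\in E}\in[0,\infty)^E$, the passage time of a finite path $\gamma$ in $(V,E)$ is $\tau(\gamma)=\sum_{e\in\gamma}\omega_e$, and $\tau(x,y)=\inf\{\tau(\gamma):\gamma \text{ a path in }(V,E)\text{ from }x\text{ to }y\}$. *)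

From Stdlib Require Import ZArith Reals List.
From Coquelicot Require Import Coquelicot.
Open Scope R_scope.

Definition vertex := (Z * Z)%type.

(* nearest-neighbour adjacency in Z^2 (also used for the dual lattice,
   a dual vertex (a,b) standing for (a+1/2, b+1/2)) *)
Definition adj (u w : vertex) : Prop :=
  (Z.abs (fst u - fst w) + Z.abs (snd u - snd w) = 1)%Z.

Fixpoint walk (A : vertex -> vertex -> Prop) (x : vertex) (l : list vertex)
  (y : vertex) : Prop :=
  match l with
  | nil => x = y
  | w :: l' => A x w /\ walk A w l' y
  end.

Definition infinite_set (S : vertex -> Prop) : Prop :=
  forall l : list vertex, exists x, S x /\ ~ In x l.

Definition lattice_connected (S : vertex -> Prop) : Prop :=
  forall x y, S x -> S y -> exists l, walk (fun a b => adj a b /\ S b) x l y.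

(* The primal edge {u,w} is the one bisected by the dual edge {p,q}
   (dual vertex (a,b) = (a+1/2,b+1/2)): both are edges and their midpoints
   coincide, i.e. u + w = p + q + (1,1). *)
Definition bisects (p q u w : vertex) : Prop :=
  adj p q /\ adj u w /\
  (fst u + fst w = fst p + fst q + 1)%Z /\
  (snd u + snd w = snd p + snd q + 1)%Z.

(* g : Z -> dual vertices is a doubly infinite dual path with no vertex
   self-intersections; its i-th edge e_i^* is {g i, g (i+1)} *)
Definition dual_path (g : Z -> vertex) : Prop :=
  (forall i, adj (g i) (g (i + 1)%Z)) /\
  (forall i j, g i = g j -> i = j).

Definition crossed (g : Z -> vertex) (u w : vertex) : Prop :=
  exists i, bisects (g i) (g (i + 1)%Z) u w.

Definition cut_adj (g : Z -> vertex) (u w : vertex) : Prop :=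
  adj u w /\ ~ crossed g u w.

Definition is_component (A : vertex -> vertex -> Prop) (C : vertex -> Prop) : Prop :=
  (exists x, C x) /\
  (forall x y, C x -> A x y -> C y) /\
  (forall x y, C x -> C y -> exists l, walk A x l y).

Fixpoint ptime (om : vertex -> vertex -> R) (x : vertex) (l : list vertex) : R :=
  match l with
  | nil => 0
  | w :: l' => om x w + ptime om w l'
  end.

Definition adjV (V : vertex -> Prop) (a b : vertex) : Prop :=
  adj a b /\ V a /\ V b.

(* tau(x,y) = inf of passage times of paths in (V,E) from x to y
   (finite whenever V is connected and x,y in V) *)
Definition tau (V : vertex -> Prop) (om : vertex -> vertex -> R)
  (x y : vertex) : R :=
  real (Glb_Rbar (fun t => exists l, V x /\ walk (adjV V) x l y /\ t = ptime om x l)).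

From Stdlib Require Import ZArith Reals List Lia Lra Classical.
From Coquelicot Require Import Coquelicot.

(* Put h_z(n) = tau(z, v_n) - tau(v_0, v_n); then B_n(x, y) = h_x(n) - h_y(n), so it
   suffices that every h_z converges, and h_z is bounded by the triangle inequality.
   The planar input is that walks in V from v_a to v_b and from v_c to v_d meet
   whenever a < c < b < d.  This is a discrete Jordan curve argument: a closed primal
   walk and a closed dual walk cross an even number of times, which also shows that
   the dual path separates V from its complement.  Hence, for 0 < m < n < n', a
   near-geodesic from v_0 to v_n meets every walk from z to v_m or every walk from z
   to v_n', and exchanging tails at the meeting point gives
   h_z(n) <= max (h_z(m), h_z(n')).  A bounded sequence without such peaks is
   eventually monotone, hence convergent. *)

Section Walks.

Variable A : vertex -> vertex -> Prop.

Lemma walk_app x l1 y l2 z :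
  walk A x l1 y -> walk A y l2 z -> walk A x (l1 ++ l2) z.
Proof.
  revert x; induction l1 as [|a l1 IH]; simpl; intros x H1 H2.
  - now subst.
  - destruct H1; split; auto.
Qed.

Lemma walk_end_in x l y : walk A x l y -> In y (x :: l).
Proof.
  revert x; induction l as [|a l IH]; simpl; intros x H.
  - auto.
  - destruct H as [_ H]; apply IH in H; simpl in H; tauto.
Qed.

Lemma walk_split_at x l y z : In z (x :: l) -> walk A x l y ->
  exists l1 l2, l = l1 ++ l2 /\ walk A x l1 z /\ walk A z l2 y.
Proof.
  revert x; induction l as [|a l IH]; simpl; intros x Hin H.
  - destruct Hin as [<-|[]]. exists nil, nil; simpl; auto.
  - destruct Hin as [<-|Hin].
    + exists nil, (a :: l); simpl; auto.
    + destruct H as [Ha H]. destruct (IH a Hin H) as (l1 & l2 & -> & W1 & W2).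
      exists (a :: l1), l2; simpl; auto.
Qed.

Lemma walk_rev (Asym : forall a b, A a b -> A b a) x l y : walk A x l y ->
  exists l', walk A y l' x /\ forall t, In t (y :: l') -> In t (x :: l).
Proof.
  revert x; induction l as [|a l IH]; simpl; intros x H.
  - subst; exists nil; simpl; auto.
  - destruct H as [Ha H]. destruct (IH a H) as (k & Wk & Ik).
    exists (k ++ x :: nil); split.
    + apply walk_app with a; simpl; auto.
    + intros t [<-|Ht]; [right; apply Ik; simpl; auto|].
      destruct (in_app_or k (x :: nil) t Ht) as [Hh|[<-|[]]]; simpl; auto.
      right; apply Ik; simpl; auto.
Qed.

Lemma walk_impl (B : vertex -> vertex -> Prop) (HAB : forall a b, A a b -> B a b) x l y :
  walk A x l y -> walk B x l y.
Proof. revert x; induction l; simpl; intros x H; [auto|destruct H; split; auto]. Qed.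

Lemma walk_invariant (B : vertex -> vertex -> Prop) (P : vertex -> Prop)
  (HP : forall a b, P a -> A a b -> B a b /\ P b) x l y :
  P x -> walk A x l y -> walk B x l y /\ forall t, In t (x :: l) -> P t.
Proof.
  revert x; induction l as [|a l IH]; simpl; intros x Px W.
  - subst; split; auto. intros t [<-|[]]; auto.
  - destruct W as [Ha W]. destruct (HP _ _ Px Ha) as [Hb Pa].
    destruct (IH a Pa W) as [W' I']; split; auto.
    intros t [<-|Ht]; auto.
Qed.

Fixpoint steps (x : vertex) (l : list vertex) : list (vertex * vertex) :=
  match l with nil => nil | w :: l' => (x, w) :: steps w l' end.

Lemma steps_app x l1 y l2 : walk A x l1 y ->
  steps x (l1 ++ l2) = steps x l1 ++ steps y l2.
Proof.
  revert x; induction l1 as [|a l1 IH]; simpl; intros x H; [now subst|].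
  destruct H as [_ H]; now rewrite (IH a H).
Qed.

Lemma steps_rel x l y : walk A x l y ->
  forall s, In s (steps x l) -> A (fst s) (snd s).
Proof.
  revert x; induction l as [|a l IH]; simpl; intros x H s Hs; [destruct Hs|].
  destruct H as [Ha H]; destruct Hs as [<-|Hs]; simpl; auto. apply (IH a H s Hs).
Qed.

End Walks.

Lemma steps_in x l s : In s (steps x l) -> In (fst s) (x :: l) /\ In (snd s) (x :: l).
Proof.
  revert x; induction l as [|a l IH]; simpl; intros x H; [destruct H|].
  destruct H as [<-|H]; simpl; auto. apply IH in H; simpl in H; tauto.
Qed.

Open Scope Z_scope. Open Scope bool_scope.

(* Dual walks are allowed to pause, which lets a primal vertex [v] be reused
   as the dual vertex [v + (1/2,1/2)] and joined to nearby dual vertices. *)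
Definition adj_or_eq (p q : vertex) : Prop := adj p q \/ p = q.

Lemma adj_or_eq_sym a b : adj_or_eq a b -> adj_or_eq b a.
Proof. unfold adj_or_eq, adj; intros [H|H]; [left; lia|right; auto]. Qed.

Definition adjb (p q : vertex) : bool :=
  Z.eqb (Z.abs (fst p - fst q) + Z.abs (snd p - snd q)) 1.

Definition bisectsb (p q u w : vertex) : bool :=
  adjb p q && adjb u w && Z.eqb (fst u + fst w) (fst p + fst q + 1)
  && Z.eqb (snd u + snd w) (snd p + snd q + 1).

Lemma bisectsP p q u w : bisectsb p q u w = true <-> bisects p q u w.
Proof.
  unfold bisectsb, adjb, bisects, adj.
  rewrite !Bool.andb_true_iff, !Z.eqb_eq. tauto.
Qed.

Lemma adj_cases (p q : vertex) : adj p q ->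
  q = (fst p + 1, snd p) \/ q = (fst p - 1, snd p) \/
  q = (fst p, snd p + 1) \/ q = (fst p, snd p - 1).
Proof.
  destruct p as [a b], q as [c d]; unfold adj; simpl; intro H.
  assert ((c = a + 1 /\ d = b) \/ (c = a - 1 /\ d = b) \/ (c = a /\ d = b + 1)
    \/ (c = a /\ d = b - 1)) as [[-> ->]|[[-> ->]|[[-> ->]|[-> ->]]]] by lia; auto.
Qed.

Lemma bisects_endpoint p q u w : bisects p q u w -> u = p \/ u = q \/ w = p \/ w = q.
Proof.
  destruct p as [p1 p2], q as [q1 q2], u as [u1 u2], w as [w1 w2].
  unfold bisects, adj; simpl. intros (H1 & H2 & H3 & H4).
  assert ((u1 = p1 /\ u2 = p2) \/ (u1 = q1 /\ u2 = q2) \/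
          (w1 = p1 /\ w2 = p2) \/ (w1 = q1 /\ w2 = q2)) by lia.
  intuition (subst; auto).
Qed.

Lemma bisects_unique p q p' q' u w : bisects p q u w -> bisects p' q' u w ->
  (p = p' /\ q = q') \/ (p = q' /\ q = p').
Proof.
  destruct p as [p1 p2], q as [q1 q2], p' as [r1 r2], q' as [s1 s2],
    u as [u1 u2], w as [w1 w2].
  unfold bisects, adj; simpl. intros (H1 & H2 & H3 & H4) (H5 & H6 & H7 & H8).
  assert ((p1 = r1 /\ p2 = r2 /\ q1 = s1 /\ q2 = s2) \/
          (p1 = s1 /\ p2 = s2 /\ q1 = r1 /\ q2 = r2)) by lia.
  intuition (subst; auto).
Qed.

Lemma bisects_swap p q u w : bisects p q u w -> bisects p q w u.
Proof. unfold bisects, adj. lia. Qed.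

Lemma steps_bisects_touch x l s a b : In s (steps x l) ->
  bisects (fst s) (snd s) a b -> In a (x :: l) \/ In b (x :: l).
Proof.
  intros Hs Hb. apply steps_in in Hs.
  destruct (bisects_endpoint _ _ _ _ Hb) as [ -> | [ -> | [ -> | -> ] ] ]; tauto.
Qed.

(** * Crossing numbers of dual and primal walks *)

Definition sumZ (l : list Z) : Z := fold_right Z.add 0 l.

Definition cross_ind (d c : vertex * vertex) : Z :=
  if bisectsb (fst d) (snd d) (fst c) (snd c) then 1 else 0.

Definition crossings (D C : list (vertex * vertex)) : Z :=
  sumZ (map (fun d => sumZ (map (cross_ind d) C)) D).

(* [ray_ind h e] is 1 iff the ray from the dual vertex [h] towards +x crosses
   the primal edge [e]; [sweep_ind p q z] is 1 iff the primal vertex [z] lies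
   on the strip swept by that ray when [h] moves vertically from [p] to [q]. *)
Definition ray_ind (h : vertex) (e : vertex * vertex) : Z :=
  if (fst (fst e) =? fst (snd e)) && (fst h + 1 <=? fst (fst e))
     && (Z.min (snd (fst e)) (snd (snd e)) =? snd h) then 1 else 0.

Definition sweep_ind (p q z : vertex) : Z :=
  if (fst p =? fst q) && negb (snd p =? snd q) && (snd z =? Z.max (snd p) (snd q))
     && (fst p + 1 <=? fst z) then 1 else 0.

Lemma edge_pair_parity p q u w : adj_or_eq p q -> adj u w ->
  Z.even (cross_ind (p, q) (u, w) + ray_ind p (u, w) + ray_ind q (u, w)
          + sweep_ind p q u + sweep_ind p q w) = true.
Proof.
  intros Hpq Huw.
  destruct Hpq as [Hpq|<-];
    [destruct (adj_cases _ _ Hpq) as [ -> | [ -> | [ -> | -> ] ] ]|];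
    destruct (adj_cases _ _ Huw) as [ -> | [ -> | [ -> | -> ] ] ];
    destruct p as [p1 p2], u as [u1 u2];
    unfold cross_ind, bisectsb, adjb, ray_ind, sweep_ind; simpl;
    repeat (match goal with
            | |- context [Z.eqb ?a ?b] => destruct (Z.eqb_spec a b)
            | |- context [Z.leb ?a ?b] => destruct (Z.leb_spec a b)
            end; simpl; try (exfalso; lia)); reflexivity.
Qed.

Lemma sumZ_app l1 l2 : sumZ (l1 ++ l2) = sumZ l1 + sumZ l2.
Proof. induction l1; simpl; lia. Qed.

Lemma sumZ_map_add {T} (f g : T -> Z) l :
  sumZ (map (fun e => f e + g e) l) = sumZ (map f l) + sumZ (map g l).
Proof. induction l; simpl; lia. Qed.

Lemma sumZ_map_even {T} (f : T -> Z) l : (forall e, In e l -> Z.Even (f e)) ->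
  Z.Even (sumZ (map f l)).
Proof.
  induction l as [|a l IH]; simpl; intro H.
  - exists 0; lia.
  - destruct (H a (or_introl eq_refl)) as [k Hk].
    destruct IH as [m Hm]; [intros; apply H; auto|]. exists (k + m); lia.
Qed.

Lemma sumZ_steps_closed (R : vertex -> vertex -> Prop) (f : vertex -> Z) x l :
  walk R x l x ->
  sumZ (map (fun s => f (fst s)) (steps x l)) = sumZ (map (fun s => f (snd s)) (steps x l)).
Proof.
  enough (forall x y, walk R x l y ->
    sumZ (map (fun s => f (fst s)) (steps x l)) + f y =
    f x + sumZ (map (fun s => f (snd s)) (steps x l))) by (intro W; specialize (H x x W); lia).
  induction l as [|a l IH]; simpl; intros x' y H.
  - subst; lia.
  - destruct H as [_ H]; specialize (IH a y H); lia.
Qed.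

(* The potentials telescope along closed walks, leaving only the crossings. *)
Lemma crossings_closed_even x C y D : walk adj x C x -> walk adj_or_eq y D y ->
  Z.Even (crossings (steps y D) (steps x C)).
Proof.
  intros HC HD.
  set (SF h := sumZ (map (ray_ind h) (steps x C))).
  assert (Hd : forall p q, adj_or_eq p q ->
     Z.Even (sumZ (map (cross_ind (p, q)) (steps x C)) + SF p + SF q)).
  { intros p q Hpq.
    destruct (sumZ_map_even (fun e => cross_ind (p, q) e + ray_ind p e + ray_ind q e
                  + sweep_ind p q (fst e) + sweep_ind p q (snd e)) (steps x C)) as [k Hk].
    { intros [u w] Hin. apply Z.even_spec, edge_pair_parity; auto.
      apply (steps_rel _ _ _ _ HC _ Hin). }
    rewrite !sumZ_map_add, (sumZ_steps_closed _ (sweep_ind p q) x C HC) in Hk.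
    exists (k - sumZ (map (fun s => sweep_ind p q (snd s)) (steps x C))).
    unfold SF. lia. }
  destruct (sumZ_map_even (fun d => sumZ (map (cross_ind d) (steps x C))
                 + SF (fst d) + SF (snd d)) (steps y D)) as [k Hk].
  { intros [p q] Hin. apply Hd, (steps_rel _ _ _ _ HD _ Hin). }
  rewrite !sumZ_map_add, (sumZ_steps_closed _ SF y D HD) in Hk.
  exists (k - sumZ (map (fun s => SF (snd s)) (steps y D))).
  unfold crossings. lia.
Qed.

Lemma crossings_app_l D1 D2 C : crossings (D1 ++ D2) C = crossings D1 C + crossings D2 C.
Proof. unfold crossings; rewrite map_app, sumZ_app; lia. Qed.

Lemma crossings_app_r D C1 C2 : crossings D (C1 ++ C2) = crossings D C1 + crossings D C2.
Proof.
  unfold crossings. induction D as [|d D IH]; simpl; [lia|].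
  rewrite map_app, sumZ_app. lia.
Qed.

Lemma crossings_nil_bisects D C :
  (forall d c, In d D -> In c C -> ~ bisects (fst d) (snd d) (fst c) (snd c)) ->
  crossings D C = 0.
Proof.
  intro H. unfold crossings.
  induction D as [|d D IH]; simpl; [lia|].
  rewrite IH by (intros; apply H; simpl; auto).
  enough (sumZ (map (cross_ind d) C) = 0) by lia.
  assert (H' : forall c, In c C -> ~ bisects (fst d) (snd d) (fst c) (snd c))
    by (intros; apply H; simpl; auto). clear H IH.
  induction C as [|c C IH]; simpl; [lia|].
  unfold cross_ind at 1. destruct (bisectsb _ _ _ _) eqn:E.
  - apply bisectsP in E. exfalso; apply (H' c); simpl; auto.
  - rewrite IH; [lia|]. intros; apply H'; simpl; auto.
Qed.

Lemma crossings_nil_separated (S : vertex -> Prop) D C :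
  (forall d a b, In d D -> bisects (fst d) (snd d) a b -> S a \/ S b) ->
  (forall c, In c C -> ~ S (fst c) /\ ~ S (snd c)) ->
  crossings D C = 0.
Proof.
  intros HD HC. apply crossings_nil_bisects. intros d c Hd Hc Hb.
  destruct (HC c Hc). destruct (HD d _ _ Hd Hb); auto.
Qed.

Definition fpath (f : Z -> vertex) (i : Z) (n : nat) : list vertex :=
  map (fun k => f (i + Z.of_nat k)) (seq 1 n).

Lemma fpath_S f i n : fpath f i (S n) = fpath f i n ++ f (i + Z.of_nat n + 1) :: nil.
Proof.
  unfold fpath. rewrite seq_S, map_app. simpl. do 3 f_equal. lia.
Qed.

Lemma fpath_walk (R : vertex -> vertex -> Prop) f i n : (forall k, R (f k) (f (k + 1))) ->
  walk R (f i) (fpath f i n) (f (i + Z.of_nat n)).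
Proof.
  intro H. induction n as [|n IH].
  - simpl. f_equal; lia.
  - rewrite fpath_S. apply walk_app with (f (i + Z.of_nat n)); auto.
    simpl. split; [apply H|f_equal; lia].
Qed.

Lemma fpath_steps_app f i n : steps (f i) (fpath f i (S n)) =
  steps (f i) (fpath f i n) ++ (f (i + Z.of_nat n), f (i + Z.of_nat n + 1)) :: nil.
Proof.
  rewrite fpath_S, (steps_app (fun _ _ => True) _ _ (f (i + Z.of_nat n))); auto.
  apply (fpath_walk (fun _ _ => True)); auto.
Qed.

Lemma fpath_steps f i n s : In s (steps (f i) (fpath f i n)) ->
  exists k, i <= k < i + Z.of_nat n /\ s = (f k, f (k + 1)).
Proof.
  induction n as [|n IH]; intro Hs; [destruct Hs|].
  rewrite fpath_steps_app in Hs. apply in_app_or in Hs. destruct Hs as [Hs|[<-|[]]].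
  - destruct (IH Hs) as (k & Hk & ->). exists k; split; auto; lia.
  - exists (i + Z.of_nat n); split; auto; lia.
Qed.

Section DualPath.

Variable g : Z -> vertex.
Hypothesis Hg : dual_path g.

Lemma bisects_index_unique i j u w :
  bisects (g i) (g (i + 1)) u w -> bisects (g j) (g (j + 1)) u w -> i = j.
Proof.
  destruct Hg as [_ Hi]. intros H1 H2.
  destruct (bisects_unique _ _ _ _ _ _ H1 H2) as [[E1 _]|[E1 E2]].
  - now apply Hi.
  - apply Hi in E1; apply Hi in E2; lia.
Qed.

Lemma segment_crossings_edge i n j u w : bisects (g j) (g (j + 1)) u w ->
  crossings (steps (g i) (fpath g i n)) ((u, w) :: nil) =
  if (i <=? j) && (j <? i + Z.of_nat n) then 1 else 0.
Proof.
  intro Hj. induction n as [|n IH].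
  - unfold crossings; simpl.
    destruct (Z.leb_spec i j), (Z.ltb_spec j (i + 0)); simpl; lia.
  - rewrite fpath_steps_app, crossings_app_l, IH.
    unfold crossings at 1, cross_ind; simpl.
    destruct (bisectsb _ _ u w) eqn:E.
    + apply bisectsP in E. pose proof (bisects_index_unique _ _ _ _ E Hj).
      repeat match goal with |- context [Z.leb ?a ?b] => destruct (Z.leb_spec a b)
        | |- context [Z.ltb ?a ?b] => destruct (Z.ltb_spec a b) end; simpl; lia.
    + assert (j <> i + Z.of_nat n)
        by (intros ->; apply bisectsP in Hj; congruence).
      repeat match goal with |- context [Z.leb ?a ?b] => destruct (Z.leb_spec a b)
        | |- context [Z.ltb ?a ?b] => destruct (Z.ltb_spec a b) end; simpl; lia.
Qed.

Lemma segment_crossings_uncrossed i n C :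
  (forall c, In c C -> ~ crossed g (fst c) (snd c)) ->
  crossings (steps (g i) (fpath g i n)) C = 0.
Proof.
  intro HC. apply crossings_nil_bisects. intros d c Hd Hc Hb.
  destruct (fpath_steps _ _ _ _ Hd) as (k & _ & ->).
  apply (HC c Hc). now exists k.
Qed.

End DualPath.

(** * The complement of a box is connected *)

Definition far (r : Z) (z : vertex) : Prop := r < Z.abs (fst z) \/ r < Z.abs (snd z).

Lemma injective_seq_far (h : nat -> vertex) (Hinj : forall m m', h m = h m' -> m = m') r :
  exists m, far r (h m).
Proof.
  apply NNPP; intro Hn.
  assert (Hb : forall m, Z.abs (fst (h m)) <= r /\ Z.abs (snd (h m)) <= r).
  { intro m. unfold far in Hn. split; apply Z.nlt_ge; intro; apply Hn; exists m; auto. }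
  assert (r0 : 0 <= r) by (destruct (Hb 0%nat); lia).
  set (K := Z.to_nat (2 * r + 1)).
  set (rng := map (fun m => - r + Z.of_nat m) (seq 0 K)).
  assert (Hr : forall z, Z.abs z <= r -> In z rng).
  { intros z Hz. apply in_map_iff. exists (Z.to_nat (z + r)). split; [lia|].
    apply in_seq; unfold K; lia. }
  set (L := map h (seq 0 (K * K + 1))).
  assert (ND : NoDup L).
  { apply NoDup_map_NoDup_ForallPairs; [|apply seq_NoDup]. intros a b _ _; apply Hinj. }
  assert (IN : incl L (list_prod rng rng)).
  { intros z Hz. apply in_map_iff in Hz. destruct Hz as (m & <- & _).
    destruct (Hb m). destruct (h m); apply in_prod; auto. }
  assert (H : (length L <= length rng * length rng)%nat)
    by (rewrite <- length_prod; exact (NoDup_incl_length ND IN)).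
  unfold L, rng in H. rewrite !length_map, !length_seq in H. lia.
Qed.

Definition dist1 (a b : vertex) : Z := Z.abs (fst a - fst b) + Z.abs (snd a - snd b).

Definition in_box (a b z : vertex) : Prop :=
  Z.min (fst a) (fst b) <= fst z <= Z.max (fst a) (fst b) /\
  Z.min (snd a) (snd b) <= snd z <= Z.max (snd a) (snd b).

Definition step_toward (a b : vertex) : vertex :=
  if fst a <? fst b then (fst a + 1, snd a) else if fst b <? fst a then (fst a - 1, snd a)
  else if snd a <? snd b then (fst a, snd a + 1) else if snd b <? snd a then (fst a, snd a - 1)
  else a.

Fixpoint walk_toward (n : nat) (a b : vertex) : list vertex :=
  match n with O => nil | S n => step_toward a b :: walk_toward n (step_toward a b) b end.

Lemma step_toward_spec a b : adj_or_eq a (step_toward a b) /\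
  dist1 (step_toward a b) b = Z.max 0 (dist1 a b - 1) /\
  (forall z, in_box (step_toward a b) b z -> in_box a b z) /\ in_box a b (step_toward a b).
Proof.
  destruct a as [a1 a2], b as [b1 b2]. unfold step_toward, adj_or_eq, adj, in_box, dist1; simpl.
  repeat match goal with |- context [Z.ltb ?a ?b] => destruct (Z.ltb_spec a b) end; simpl;
    (split; [try (left; lia); right; f_equal; lia|]); repeat split; intros; lia.
Qed.

Lemma walk_toward_spec n a b : (Z.to_nat (dist1 a b) <= n)%nat ->
  walk adj_or_eq a (walk_toward n a b) b /\ forall z, In z (walk_toward n a b) -> in_box a b z.
Proof.
  revert a; induction n as [|n IH]; intros a Hn.
  - simpl. split; [|intros _ []]. destruct a as [a1 a2], b as [b1 b2].
    unfold dist1 in Hn; simpl in Hn. f_equal; lia.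
  - destruct (step_toward_spec a b) as (H1 & H2 & H3 & H4).
    destruct (IH (step_toward a b)) as [W I]; [lia|].
    simpl; split; [split; auto|]. intros z [<-|Hz]; auto.
Qed.

Lemma box_walk a b : exists l, walk adj_or_eq a l b /\ forall z, In z l -> in_box a b z.
Proof. exists (walk_toward (Z.to_nat (dist1 a b)) a b). apply walk_toward_spec; lia. Qed.

Lemma far_walk_to_corner r p : far r p ->
  exists l, walk adj_or_eq p l (r + 1, r + 1) /\ forall z, In z l -> far r z.
Proof.
  intro Hp. set (M := r + 1).
  assert (Hjoin : forall c, far r c -> in_box c (M, M) c ->
    (forall z, in_box p c z -> far r z) -> (forall z, in_box c (M, M) z -> far r z) ->
    exists l, walk adj_or_eq p l (M, M) /\ forall z, In z l -> far r z).
  { intros c _ _ H1 H2. destruct (box_walk p c) as (l1 & W1 & I1).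
    destruct (box_walk c (M, M)) as (l2 & W2 & I2).
    exists (l1 ++ l2); split; [eapply walk_app; eauto|].
    intros z Hz; apply in_app_or in Hz; destruct Hz; auto. }
  unfold far, in_box in *; destruct Hp as [Hp|Hp].
  - apply (Hjoin (fst p, M)); simpl; unfold M; lia.
  - apply (Hjoin (M, snd p)); simpl; unfold M; lia.
Qed.

Lemma far_connected r p q : far r p -> far r q ->
  exists l, walk adj_or_eq p l q /\ forall z, In z l -> far r z.
Proof.
  intros Hp Hq.
  destruct (far_walk_to_corner r p Hp) as (l1 & W1 & I1).
  destruct (far_walk_to_corner r q Hq) as (l2 & W2 & I2).
  destruct (walk_rev adj_or_eq adj_or_eq_sym _ _ _ W2) as (l3 & W3 & I3).
  exists (l1 ++ l3); split; [eapply walk_app; eauto|].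
  intros z Hz; apply in_app_or in Hz; destruct Hz as [Hz|Hz]; auto.
  destruct (I3 z (or_intror Hz)) as [<-|Hz']; auto.
Qed.

(** * The dual path separates [V] from its complement *)

Definition box_bound (l : list vertex) : Z :=
  fold_right (fun z m => Z.max m (Z.max (Z.abs (fst z)) (Z.abs (snd z)))) 0 l.

Lemma box_bound_not_far z l : In z l -> ~ far (box_bound l) z.
Proof.
  unfold far; induction l as [|a l IH]; simpl; intros H; [destruct H|].
  destruct H as [<-|H]; [lia|]. specialize (IH H). lia.
Qed.

Section Separation.

Variable g : Z -> vertex.
Hypothesis Hg : dual_path g.

(* Close the walk by the edge [{w,u}] and close a long stretch of the dual path
   around [e_j] far away from the walk: the two closed curves cross exactly once. *)
Lemma cut_walk_not_across u R w j :
  walk (cut_adj g) u R w -> ~ bisects (g j) (g (j + 1)) u w.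
Proof.
  intros HR Hb.
  set (r := box_bound (u :: R)).
  destruct (injective_seq_far (fun m => g (j - Z.of_nat m))) with (r := r) as [m1 Hm1].
  { intros m m' E. apply (proj2 Hg) in E. lia. }
  destruct (injective_seq_far (fun m => g (j + 1 + Z.of_nat m))) with (r := r) as [m2 Hm2].
  { intros m m' E. apply (proj2 Hg) in E. lia. }
  set (j' := j - Z.of_nat m1) in *. set (k' := j + 1 + Z.of_nat m2) in *.
  set (n := Z.to_nat (k' - j')).
  assert (Wg : walk adj (g j') (fpath g j' n) (g k')).
  { replace (g k') with (g (j' + Z.of_nat n)) by (f_equal; unfold n; lia).
    apply fpath_walk, (proj1 Hg). }
  destruct (far_connected r (g k') (g j') Hm2 Hm1) as (l & Wl & Il).
  assert (WD : walk adj_or_eq (g j') (fpath g j' n ++ l) (g j')).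
  { apply walk_app with (g k'); auto. apply (walk_impl adj); auto. now left. }
  assert (WR : walk adj u R w) by (apply (walk_impl (cut_adj g)); [intros a b []|]; auto).
  assert (WC : walk adj u (R ++ u :: nil) u).
  { apply walk_app with w; auto. simpl; split; auto.
    destruct Hb as (_ & Huw & _). unfold adj in *; lia. }
  pose proof (crossings_closed_even _ _ _ _ WC WD) as Hpar.
  rewrite (steps_app adj _ _ (g k') _ Wg), crossings_app_l in Hpar.
  rewrite (crossings_nil_separated (far r) (steps (g k') l)) in Hpar.
  2:{ intros d a b Hd Hab. destruct (steps_bisects_touch _ _ _ _ _ Hd Hab) as [Ha|Ha];
      [left|right]; destruct Ha as [<-|Ha]; auto. }
  2:{ intros c Hc. apply steps_in in Hc.
      assert (Hin : forall z, In z (u :: R ++ u :: nil) -> In z (u :: R))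
        by (simpl; intros z; rewrite in_app_iff; simpl; tauto).
      split; apply box_bound_not_far, Hin; tauto. }
  rewrite (steps_app adj _ _ w _ WR), crossings_app_r in Hpar. simpl steps in Hpar.
  rewrite segment_crossings_uncrossed in Hpar.
  2:{ intros c Hc. destruct (steps_rel _ _ _ _ HR _ Hc); auto. }
  rewrite (segment_crossings_edge g Hg j' n j w u (bisects_swap _ _ _ _ Hb)) in Hpar.
  destruct (Z.leb_spec j' j), (Z.ltb_spec j (j' + Z.of_nat n)); simpl in Hpar;
    unfold n in *; try lia.
  destruct Hpar as [x Hx]; lia.
Qed.

Variable V : vertex -> Prop.
Hypothesis HVcomp : is_component (cut_adj g) V.
Hypothesis HCcomp : is_component (cut_adj g) (fun x => ~ V x).

Lemma crossed_edge_separates i a b :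
  bisects (g i) (g (i + 1)) a b -> (V a <-> ~ V b).
Proof.
  intro Hb. split.
  - intros Ha Hb'. destruct HVcomp as (_ & _ & H). destruct (H a b Ha Hb') as [R HR].
    exact (cut_walk_not_across a R b i HR Hb).
  - intros Hb'. apply NNPP; intro Ha. destruct HCcomp as (_ & _ & H).
    destruct (H a b Ha Hb') as [R HR]. exact (cut_walk_not_across a R b i HR Hb).
Qed.

Lemma same_side_uncrossed a b : (V a <-> V b) -> ~ crossed g a b.
Proof.
  intros Hab [i Hi]. apply crossed_edge_separates in Hi. tauto.
Qed.

End Separation.

(** * Walks between interleaved boundary vertices meet *)

Lemma bisects_corner p q u w : bisects p q u w ->
  0 <= fst u - fst p <= 1 /\ 0 <= snd u - snd p <= 1.
Proof.
  destruct p as [p1 p2], q as [q1 q2], u as [u1 u2], w as [w1 w2].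
  unfold bisects, adj; simpl; lia.
Qed.

Definition link (a b : vertex) : list vertex := (fst b, snd a) :: b :: nil.

Lemma link_walk a b : Z.abs (fst a - fst b) <= 1 -> Z.abs (snd a - snd b) <= 1 ->
  walk adj_or_eq a (link a b) b.
Proof.
  destruct a as [a1 a2], b as [b1 b2]; unfold link, adj_or_eq, adj; simpl; intros H1 H2.
  repeat split; auto.
  - destruct (Z.eq_dec a1 b1); [right; f_equal; auto|left; simpl; lia].
  - destruct (Z.eq_dec a2 b2); [right; f_equal; auto|left; simpl; lia].
Qed.

(* [p + (1/2,1/2)] is at distance < 1 from [u], so the links only cross edges at [u]. *)
Lemma link_bisects_touch u p s x y : 0 <= fst u - fst p <= 1 -> 0 <= snd u - snd p <= 1 ->
  In s (steps u (link u p) ++ steps p (link p u)) -> bisects (fst s) (snd s) x y ->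
  x = u \/ y = u.
Proof.
  destruct u as [u1 u2], p as [p1 p2], x as [x1 x2], y as [y1 y2]; simpl. intros H1 H2 Hs Hb.
  assert (HH : (x1 = u1 /\ x2 = u2) \/ (y1 = u1 /\ y2 = u2)).
  { destruct Hs as [<-|[<-|[<-|[<-|[]]]]]; unfold bisects, adj in Hb; simpl in Hb; lia. }
  destruct HH as [[-> ->]|[-> ->]]; auto.
Qed.

Lemma adjV_sym (V : vertex -> Prop) a b : adjV V a b -> adjV V b a.
Proof. unfold adjV, adj; intros (H1 & H2 & H3); repeat split; auto; lia. Qed.

Section BoundaryWalks.

Variable g : Z -> vertex.
Hypothesis Hg : dual_path g.
Variable V : vertex -> Prop.
Hypothesis HVcomp : is_component (cut_adj g) V.
Hypothesis HCcomp : is_component (cut_adj g) (fun x => ~ V x).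
Hypothesis HCconn : lattice_connected (fun x => ~ V x).
Variable v : Z -> vertex.
Hypothesis Hv : forall i, V (v i) /\ exists w, bisects (g i) (g (i + 1)) (v i) w.

(* [D] runs along the dual path from [g c] to [g d] and returns to [v c] along [Q]. *)
Lemma boundary_dual_loop c d Q C : c < d -> walk (adjV V) (v d) Q (v c) ->
  (forall s, In s C -> ~ In (fst s) (v d :: Q) /\ ~ In (snd s) (v d :: Q)) ->
  exists D, walk adj_or_eq (v c) D (v c) /\
    crossings (steps (v c) D) C = crossings (steps (g c) (fpath g c (Z.to_nat (d - c)))) C.
Proof.
  intros Hcd WQ HC. set (n := Z.to_nat (d - c)).
  destruct (Hv c) as [_ [wc Hc]], (Hv d) as [_ [wd Hd]].
  destruct (bisects_corner _ _ _ _ Hc) as [Cc1 Cc2].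
  destruct (bisects_corner _ _ _ _ Hd) as [Cd1 Cd2].
  assert (Wg : walk adj (g c) (fpath g c n) (g d)).
  { replace (g d) with (g (c + Z.of_nat n)) by (f_equal; unfold n; lia).
    apply fpath_walk, (proj1 Hg). }
  assert (L1 : walk adj_or_eq (v c) (link (v c) (g c)) (g c)) by (apply link_walk; lia).
  assert (L2 : walk adj_or_eq (g d) (link (g d) (v d)) (v d)) by (apply link_walk; lia).
  assert (WQ' : walk adj_or_eq (v d) Q (v c)) by (apply (walk_impl (adjV V)); [left; apply H|auto]).
  exists (link (v c) (g c) ++ fpath g c n ++ link (g d) (v d) ++ Q). split.
  { apply walk_app with (g c); auto. apply walk_app with (g d).
    - apply (walk_impl adj); auto. now left.
    - apply walk_app with (v d); auto. }
  assert (Hend : In (v c) (v d :: Q)) by (apply (walk_end_in _ _ _ _ WQ)).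
  rewrite (steps_app _ _ _ _ _ L1), (steps_app _ _ _ _ _ Wg), (steps_app _ _ _ _ _ L2),
    !crossings_app_l.
  set (S z := In z (v d :: Q)).
  rewrite (crossings_nil_separated S (steps (v c) (link (v c) (g c))) C),
    (crossings_nil_separated S (steps (g d) (link (g d) (v d))) C),
    (crossings_nil_separated S (steps (v d) Q) C); auto; try lia.
  - intros s x y Hs Hb. exact (steps_bisects_touch _ _ _ _ _ Hs Hb).
  - intros s x y Hs Hb.
    destruct (link_bisects_touch (v d) (g d) s x y Cd1 Cd2) as [ -> | -> ];
      [apply in_or_app; auto|assumption|left; now left|right; now left].
  - intros s x y Hs Hb.
    destruct (link_bisects_touch (v c) (g c) s x y Cc1 Cc2) as [ -> | -> ];
      [apply in_or_app; auto|assumption|now left|now right].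
Qed.

(* The walk from [v a] to [v b] in [V], closed up through the complement of [V],
   crosses the dual path only at [e_a] and [e_b]. *)
Lemma boundary_primal_loop a b P : walk (adjV V) (v a) P (v b) ->
  exists C, walk adj (v a) C (v a) /\
    (forall z, In z (v a :: C) -> In z (v a :: P) \/ ~ V z) /\
    forall i n, crossings (steps (g i) (fpath g i n)) (steps (v a) C) =
      (if (i <=? b) && (b <? i + Z.of_nat n) then 1 else 0) +
      (if (i <=? a) && (a <? i + Z.of_nat n) then 1 else 0).
Proof.
  intros WP.
  destruct (Hv a) as [Va [wa Ha]], (Hv b) as [Vb [wb Hb]].
  assert (Nwa : ~ V wa) by (apply (crossed_edge_separates g Hg V HVcomp HCcomp a _ _ Ha); auto).
  assert (Nwb : ~ V wb) by (apply (crossed_edge_separates g Hg V HVcomp HCcomp b _ _ Hb); auto).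
  destruct (HCconn wb wa Nwb Nwa) as [K HK].
  destruct (walk_invariant (fun a b => adj a b /\ ~ V b) adj (fun x => ~ V x)) with
    (x := wb) (l := K) (y := wa) as [WK IK]; [intros ? ? _ []; auto|auto|auto|].
  destruct (walk_invariant (adjV V) adj V) with (x := v a) (l := P) (y := v b) as [WP' IP];
    [intros ? ? _ (? & ? & ?); auto|auto|auto|].
  exists (P ++ wb :: K ++ v a :: nil). split; [|split].
  - destruct Ha as (_ & Ha' & _), Hb as (_ & Hb' & _).
    apply walk_app with (v b); auto. split; auto.
    apply walk_app with wa; auto. split; [unfold adj in *; lia|reflexivity].
  - simpl; intros z Hz. rewrite in_app_iff in Hz; simpl in Hz.
    rewrite in_app_iff in Hz; simpl in Hz.
    destruct Hz as [H|[H|[H|[H|[H|[]]]]]]; subst; auto; right; apply IK; simpl; auto.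
  - intros i n.
    rewrite (steps_app _ _ _ _ _ WP'). simpl. rewrite (steps_app _ _ _ _ _ WK). simpl.
    change ((v b, wb) :: ?l) with (((v b, wb) :: nil) ++ l).
    rewrite !crossings_app_r, (segment_crossings_uncrossed g i n (steps (v a) P)),
      (segment_crossings_uncrossed g i n (steps wb K)),
      (segment_crossings_edge g Hg i n b _ _ Hb),
      (segment_crossings_edge g Hg i n a _ _ (bisects_swap _ _ _ _ Ha)); try lia.
    all: intros s Hs; apply steps_in in Hs; apply (same_side_uncrossed g Hg V HVcomp HCcomp).
    + split; intro; exfalso; [apply (IK (fst s))|apply (IK (snd s))]; tauto.
    + split; intros _; apply IP; tauto.
Qed.

Lemma boundary_walks_meet a b c d P Q : a < c < b -> b < d ->
  walk (adjV V) (v a) P (v b) -> walk (adjV V) (v c) Q (v d) ->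
  exists z, In z (v a :: P) /\ In z (v c :: Q).
Proof.
  intros Hac Hbd WP WQ. apply NNPP; intro Hdis.
  destruct (boundary_primal_loop a b P WP) as (C & WC & HCv & HCx).
  assert (IQ : forall t, In t (v c :: Q) -> V t).
  { refine (proj2 (walk_invariant (adjV V) (adjV V) V _ _ Q (v d) (proj1 (Hv c)) WQ)).
    intros ? ? _ H; split; [exact H|apply H]. }
  destruct (walk_rev (adjV V) (adjV_sym V) _ _ _ WQ) as (Q' & WQ' & IQ').
  destruct (boundary_dual_loop c d Q' (steps (v a) C)) as (D & WD & HD); auto; try lia.
  { intros s Hs. apply steps_in in Hs.
    assert (Hsep : forall z, In z (v a :: C) -> ~ In z (v d :: Q')).
    { intros z Hz Hq. apply IQ' in Hq. destruct (HCv z Hz) as [Hp|Hp];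
        [apply Hdis; exists z; auto|apply Hp, IQ, Hq]. }
    split; apply Hsep; tauto. }
  pose proof (crossings_closed_even _ _ _ _ WC WD) as Hpar.
  rewrite HD, HCx in Hpar.
  destruct (Z.leb_spec c b), (Z.ltb_spec b (c + Z.of_nat (Z.to_nat (d - c)))),
    (Z.leb_spec c a); simpl in Hpar; try lia.
  destruct Hpar as [k Hk]; lia.
Qed.

End BoundaryWalks.


Close Scope bool_scope. Close Scope Z_scope. Open Scope R_scope.

Lemma ptime_app om A x l1 y l2 : walk A x l1 y ->
  ptime om x (l1 ++ l2) = ptime om x l1 + ptime om y l2.
Proof.
  revert x; induction l1 as [|a l1 IH]; simpl; intros x H.
  - subst; ring.
  - destruct H as [_ H]; rewrite (IH a H); ring.
Qed.

Section PassageTimes.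

Variable V : vertex -> Prop.
Variable om : vertex -> vertex -> R.
Hypothesis Homnn : forall a b, adjV V a b -> 0 <= om a b.

Lemma ptime_nonneg x l y : walk (adjV V) x l y -> 0 <= ptime om x l.
Proof.
  revert x; induction l as [|a l IH]; simpl; intros x H; [lra|].
  destruct H as [Ha H]. specialize (Homnn _ _ Ha). specialize (IH a H). lra.
Qed.

(* Without a walk from [x] to [y], [tau] takes the junk value [real p_infty = 0]. *)
Lemma tau_glb x l0 y : V x -> walk (adjV V) x l0 y ->
  is_glb_Rbar (fun t => exists l, V x /\ walk (adjV V) x l y /\ t = ptime om x l)
    (tau V om x y).
Proof.
  intros Hx W0. unfold tau.
  set (E := fun t => exists l, V x /\ walk (adjV V) x l y /\ t = ptime om x l).
  pose proof (Glb_Rbar_correct E) as Hglb.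
  destruct (Glb_Rbar E) as [r| |]; [exact Hglb|exfalso..]; destruct Hglb as [Hlb Hglb].
  - apply (Hlb (ptime om x l0)). now exists l0.
  - apply (Hglb 0). intros t (l & _ & Wl & ->). exact (ptime_nonneg _ _ _ Wl).
Qed.

Lemma tau_le_ptime x l y : V x -> walk (adjV V) x l y -> tau V om x y <= ptime om x l.
Proof. intros Hx W. apply (proj1 (tau_glb x l y Hx W)). now exists l. Qed.

Lemma tau_nonneg x l y : V x -> walk (adjV V) x l y -> 0 <= tau V om x y.
Proof.
  intros Hx W. apply (proj2 (tau_glb x l y Hx W) 0).
  intros t (l' & _ & W' & ->). exact (ptime_nonneg _ _ _ W').
Qed.

Lemma tau_approx x l0 y eps : V x -> walk (adjV V) x l0 y -> 0 < eps ->
  exists l, walk (adjV V) x l y /\ ptime om x l < tau V om x y + eps.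
Proof.
  intros Hx W0 Heps. apply NNPP; intro Hn.
  assert (Hlb : is_lb_Rbar (fun t => exists l, V x /\ walk (adjV V) x l y /\ t = ptime om x l)
                  (tau V om x y + eps)).
  { intros t (l & _ & Wl & ->). simpl. apply Rnot_lt_le; intro Hlt. apply Hn; now exists l. }
  pose proof (proj2 (tau_glb x l0 y Hx W0) _ Hlb). simpl in *. lra.
Qed.

Lemma tau_exchange_le z p0 p q pi eta w : V z -> V p0 ->
  walk (adjV V) z pi p -> walk (adjV V) p0 eta q -> In w (z :: pi) -> In w (p0 :: eta) ->
  tau V om z q + tau V om p0 p <= ptime om z pi + ptime om p0 eta.
Proof.
  intros Vz V0 Wpi Weta I1 I2.
  destruct (walk_split_at _ _ _ _ _ I1 Wpi) as (a1 & a2 & -> & Wa1 & Wa2).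
  destruct (walk_split_at _ _ _ _ _ I2 Weta) as (b1 & b2 & -> & Wb1 & Wb2).
  pose proof (tau_le_ptime _ _ _ Vz (walk_app _ _ _ _ _ _ Wa1 Wb2)) as T1.
  pose proof (tau_le_ptime _ _ _ V0 (walk_app _ _ _ _ _ _ Wb1 Wa2)) as T2.
  rewrite (ptime_app om _ _ _ _ b2 Wa1) in T1. rewrite (ptime_app om _ _ _ _ a2 Wb1) in T2.
  rewrite (ptime_app om _ _ _ _ a2 Wa1), (ptime_app om _ _ _ _ b2 Wb1). lra.
Qed.

Hypothesis HVconn : lattice_connected V.

Lemma connected_walk x y : V x -> V y -> exists l, walk (adjV V) x l y.
Proof.
  intros Hx Hy. destruct (HVconn x y Hx Hy) as [l Hl]. exists l.
  refine (proj1 (walk_invariant _ (adjV V) V _ x l y Hx Hl)).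
  intros a b Ha [H1 H2]; repeat split; auto.
Qed.

Lemma tau_triangle x y z : V x -> V y -> V z ->
  tau V om x z <= tau V om x y + tau V om y z.
Proof.
  intros Hx Hy Hz.
  destruct (connected_walk x y Hx Hy) as [l1 W1], (connected_walk y z Hy Hz) as [l2 W2].
  apply Rnot_lt_le; intro Hlt.
  set (eps := (tau V om x z - tau V om x y - tau V om y z) / 2).
  destruct (tau_approx x l1 y eps) as (k1 & K1 & P1); auto; [unfold eps; lra|].
  destruct (tau_approx y l2 z eps) as (k2 & K2 & P2); auto; [unfold eps; lra|].
  pose proof (tau_le_ptime _ _ _ Hx (walk_app _ _ _ _ _ _ K1 K2)) as T.
  rewrite (ptime_app om _ _ _ _ _ K1) in T. unfold eps in *. lra.
Qed.

End PassageTimes.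

(** * Convergence *)

Lemma le_or_le_of_eps a b c :
  (forall eps, 0 < eps -> a <= b + eps \/ a <= c + eps) -> a <= b \/ a <= c.
Proof.
  intro H. apply NNPP; intro Hn. apply not_or_and in Hn as [Hb Hc].
  destruct (H (Rmin (a - b) (a - c) / 2)) as [H'|H'].
  - apply Rmin_case; lra.
  - pose proof (Rmin_l (a - b) (a - c)); lra.
  - pose proof (Rmin_r (a - b) (a - c)); lra.
Qed.

(* A bounded sequence with no strict peak after index 0 is eventually monotone. *)
Lemma ex_finite_lim_seq_no_peak (h : nat -> R) M :
  (forall n, Rabs (h n) <= M) ->
  (forall m n n', (0 < m < n)%nat -> (n < n')%nat -> h n <= h m \/ h n <= h n') ->
  ex_finite_lim_seq h.
Proof.
  intros Hb Hpeak.
  assert (HM : forall n, - M <= h n <= M) by (intro n; apply Rabs_le_between, Hb).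
  destruct (classic (exists n0, (1 <= n0)%nat /\ h n0 < h (S n0))) as [[n0 [Hn0 Hup]]|Hdown].
  - assert (Hrise : forall j, h n0 < h (j + S n0)%nat /\ h (j + S n0)%nat <= h (S j + S n0)%nat).
    { assert (Hstep : forall j, h n0 < h (j + S n0)%nat -> h (j + S n0)%nat <= h (S j + S n0)%nat).
      { intros j Hj. destruct (Hpeak n0 (j + S n0)%nat (S j + S n0)%nat) as [H|H]; lia || lra. }
      induction j as [|j [IH1 IH2]].
      - split; [exact Hup|apply (Hstep 0%nat); exact Hup].
      - assert (h n0 < h (S j + S n0)%nat) by lra. split; auto. }
    destruct (ex_finite_lim_seq_incr (fun j => h (j + S n0)%nat) M) as [B HB].
    + intro j. apply Hrise.
    + intro j. apply HM.
    + exists B. now apply (is_lim_seq_incr_n h (S n0)).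
  - destruct (ex_finite_lim_seq_decr (fun j => h (j + 1)%nat) (- M)) as [B HB].
    + intro j. apply Rnot_lt_le; intro Hlt. apply Hdown. exists (j + 1)%nat.
      split; [lia|]. now replace (S (j + 1)) with (S j + 1)%nat by lia.
    + intro j. apply HM.
    + exists B. now apply (is_lim_seq_incr_n h 1).
Qed.

Section Busemann.

Variable g : Z -> vertex.
Hypothesis Hg : dual_path g.
Variable V : vertex -> Prop.
Hypothesis HVconn : lattice_connected V.
Hypothesis HVcomp : is_component (cut_adj g) V.
Hypothesis HCcomp : is_component (cut_adj g) (fun x => ~ V x).
Hypothesis HCconn : lattice_connected (fun x => ~ V x).
Variable v : Z -> vertex.
Hypothesis Hv : forall i, V (v i) /\ exists w, bisects (g i) (g (i + 1)%Z) (v i) w.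
Variable om : vertex -> vertex -> R.
Hypothesis Homnn : forall a b, adjV V a b -> 0 <= om a b.

Lemma walks_to_one_side_meet z eta N m n' :
  walk (adjV V) (v 0%Z) eta (v N) -> (0 < m < N)%Z -> (N < n')%Z ->
  (forall pi, walk (adjV V) z pi (v m) -> exists w, In w (z :: pi) /\ In w (v 0%Z :: eta)) \/
  (forall pi, walk (adjV V) z pi (v n') -> exists w, In w (z :: pi) /\ In w (v 0%Z :: eta)).
Proof.
  intros Weta Hm Hn. apply NNPP; intro H. apply not_or_and in H as [H1 H2].
  apply not_all_ex_not in H1 as [pi1 H1]. apply imply_to_and in H1 as [W1 N1].
  apply not_all_ex_not in H2 as [pi2 H2]. apply imply_to_and in H2 as [W2 N2].
  destruct (walk_rev _ (adjV_sym V) _ _ _ W1) as (pi1' & W1' & I1').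
  destruct (boundary_walks_meet g Hg V HVcomp HCcomp HCconn v Hv 0 N m n' eta (pi1' ++ pi2))
    as (w & Iw1 & Iw2); try lia; auto.
  { now apply walk_app with z. }
  destruct Iw2 as [<-|Iw2]; [apply N1; exists (v m); split; auto; apply (walk_end_in _ _ _ _ W1)|].
  apply in_app_or in Iw2 as [Iw2|Iw2].
  - apply N1. exists w; split; auto. apply I1'. now right.
  - apply N2. exists w; split; auto. now right.
Qed.

Definition tau_diff (z : vertex) (n : nat) : R :=
  tau V om z (v (Z.of_nat n)) - tau V om (v 0%Z) (v (Z.of_nat n)).

(* A near-geodesic [eta] from [v 0] to [v n] is met by every walk from [z] to
   [v m] or by every walk from [z] to [v n']; exchanging tails at the meeting point
   compares [tau_diff z n] with [tau_diff z m] or [tau_diff z n']. *)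
Lemma tau_diff_no_peak z m n n' : V z -> (0 < m < n)%nat -> (n < n')%nat ->
  tau_diff z n <= tau_diff z m \/ tau_diff z n <= tau_diff z n'.
Proof.
  intros Vz Hm Hn. apply le_or_le_of_eps. intros eps Heps.
  assert (Hwalk : forall a b, V a -> V b -> exists l, walk (adjV V) a l b)
    by (apply connected_walk; auto).
  assert (V0 := proj1 (Hv 0%Z)).
  destruct (Hwalk _ _ V0 (proj1 (Hv (Z.of_nat n)))) as [l0 W0].
  destruct (tau_approx V om Homnn _ _ _ (eps / 2) V0 W0) as (eta & Weta & Peta); [lra|].
  assert (Hnear : forall k, (0 < Z.of_nat k)%Z ->
    (forall pi, walk (adjV V) z pi (v (Z.of_nat k)) ->
       exists w, In w (z :: pi) /\ In w (v 0%Z :: eta)) ->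
    tau_diff z n <= tau_diff z k + eps).
  { intros k Hk Hmeet.
    destruct (Hwalk _ _ Vz (proj1 (Hv (Z.of_nat k)))) as [l1 W1].
    destruct (tau_approx V om Homnn _ _ _ (eps / 2) Vz W1) as (pi & Wpi & Ppi); [lra|].
    destruct (Hmeet pi Wpi) as (w & I1 & I2).
    pose proof (tau_exchange_le V om Homnn _ _ _ _ _ _ w Vz V0 Wpi Weta I1 I2).
    unfold tau_diff. lra. }
  destruct (walks_to_one_side_meet z eta (Z.of_nat n) (Z.of_nat m) (Z.of_nat n') Weta)
    as [H|H]; try lia; [left|right]; apply Hnear; auto; lia.
Qed.

Lemma tau_diff_bounded z n : V z ->
  Rabs (tau_diff z n) <= tau V om z (v 0%Z) + tau V om (v 0%Z) z.
Proof.
  intro Vz. assert (V0 := proj1 (Hv 0%Z)). assert (Vn := proj1 (Hv (Z.of_nat n))).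
  destruct (connected_walk V HVconn z (v 0%Z) Vz V0) as [l1 W1].
  destruct (connected_walk V HVconn (v 0%Z) z V0 Vz) as [l2 W2].
  pose proof (tau_triangle V om Homnn HVconn z (v 0%Z) (v (Z.of_nat n)) Vz V0 Vn).
  pose proof (tau_triangle V om Homnn HVconn (v 0%Z) z (v (Z.of_nat n)) V0 Vz Vn).
  pose proof (tau_nonneg V om Homnn _ _ _ Vz W1).
  pose proof (tau_nonneg V om Homnn _ _ _ V0 W2).
  unfold tau_diff. apply Rabs_le; lra.
Qed.

Lemma tau_diff_cvg z : V z -> ex_finite_lim_seq (tau_diff z).
Proof.
  intro Vz. apply (ex_finite_lim_seq_no_peak _ (tau V om z (v 0%Z) + tau V om (v 0%Z) z)).
  - intro n. now apply tau_diff_bounded.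
  - intros m n n' Hm Hn. now apply tau_diff_no_peak.
Qed.

End Busemann.

Theorem theorem1p1
  (V : vertex -> Prop)
  (HVinf : infinite_set V) (HVconn : lattice_connected V)
  (HCinf : infinite_set (fun x => ~ V x))
  (HCconn : lattice_connected (fun x => ~ V x))
  (g : Z -> vertex) (Hg : dual_path g)
  (HVcomp : is_component (cut_adj g) V)
  (HCcomp : is_component (cut_adj g) (fun x => ~ V x))
  (v : Z -> vertex)
  (Hv : forall i, V (v i) /\ exists w, bisects (g i) (g (i + 1)%Z) (v i) w)
  (om : vertex -> vertex -> R)
  (Homsym : forall a b, om a b = om b a)
  (Homnn : forall a b, adjV V a b -> 0 <= om a b)
  (x y : vertex) (Hx : V x) (Hy : V y) :
  exists B : R,
    is_lim_seq (fun n : nat => tau V om x (v (Z.of_nat n)) - tau V om y (v (Z.of_nat n))) B.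
Proof.
  destruct (tau_diff_cvg g Hg V HVconn HVcomp HCcomp HCconn v Hv om Homnn x Hx) as [Bx HBx].
  destruct (tau_diff_cvg g Hg V HVconn HVcomp HCcomp HCconn v Hv om Homnn y Hy) as [By HBy].
  exists (Bx - By).
  apply is_lim_seq_ext with (fun n => tau_diff V v om x n - tau_diff V v om y n).
  - intro n. unfold tau_diff. ring.
  - now apply is_lim_seq_minus'.
Qed.
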